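(* Consider the honeycomb lattice with Bravais lattice vectors $\bm a_1,\bm a_2$ and sites $A(\bm R),B(\bm R)$ for $\bm R\in\mathbb Z\bm a_1+\mathbb Z\bm a_2$, with nearest-neighbour bonds $A(\bm R)$–$B(\bm R)$ of type $c$, $A(\bm R)$–$B(\bm R-\bm a_1)$ of type $a$, and $A(\bm R)$–$B(\bm R-\bm a_2)$ of type $b$. Assign to every bond $\langle ij\rangle$ of type $\alpha$ the link matrix $U_{ij}=U_{ji}=U^\alpha$, where $$U^a=\tau^y\otimes I_2,\quad U^b=-\tau^x\otimes\sigma^z,\quad U^c=-\tau^x\otimes\sigma^y,$$ with $\tau^{x,y,z},\sigma^{x,y,z}$ Pauli matrices. Then (i) for every elementary hexagon $p$, the ordered product of the link matrices around $p$ equals $-I_4$; and (ii) for any finite flake $\Lambda$ of this lattice (a finite union of closed hexagonal plaquettes whose cycle space is generated by the hexagon boundaries) admitting a Hamiltonian path, there exist unitary $4\times4$ matrices $g_j$ and signs $\eta_{ij}=\eta_{ji}\in\{+1,-1\}$ such that $g_iU_{ij}g_j^\dagger=\eta_{ij}I_4$ for every bond of $\Lambda$ and $\prod_{\langle ij\rangle\in p}\eta_{ij}=-1$ for every hexagon $p$ of $\Lambda$. Consequently the Hubbard model $$H=-\frac{t}{\sqrt3}\sum_{\langle ij\rangle}\psi_i^\dagger U_{ij}\psi_j+h.c.+\frac U2\sum_j\psi_j^\dagger\psi_j(\psi_j^\dagger\psi_j-1)$$ on $\Lambda$ (with $\psi_j$ four-component fermionic spinors) is unitarily equivalent, via $\psi_j\to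 g_j\psi_j$, to the $\pi$-flux Hubbard model $-\frac{t}{\sqrt3}\sum_{\langle ij\rangle}\eta_{ij}\psi_i^\dagger\psi_j+h.c.+\frac U2\sum_j\psi_j^\dagger\psi_j(\psi_j^\dagger\psi_j-1)$, which has a global $\mathrm{SU}(4)$ symmetry.
   Context: $t,U$ are real. The Pauli matrices $\boldsymbol\tau$ act on the first and $\boldsymbol\sigma$ on the second tensor factor of $\mathbb C^2\otimes\mathbb C^2$. With the given bond assignment, each hexagon's bonds have types $c,a,b,c,a,b$ in cyclic order. This model arises as the $J_{\mathrm{eff}}=3/2$ description of $d^1$ ions (e.g. Zr$^{3+}$ in $\alpha$-ZrCl$_3$) on a honeycomb lattice of edge-sharing octahedra. *)

(* Complex scalars: algC (algebraic complex numbers, a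
   numClosedFieldType); all Pauli-matrix entries lie in algC. *)
From HB Require Import structures.
From mathcomp Require Import all_boot all_order all_algebra algC.
From mathcomp Require Import spectral mxtens.
Set Implicit Arguments. Unset Strict Implicit. Unset Printing Implicit Defensive.
Import Order.TTheory GRing.Theory Num.Theory.
Local Open Scope ring_scope.

Notation M4 := 'M[algC]_(2 * 2).

Definition mx2 (a b c d : algC) : 'M[algC]_2 :=
  \matrix_(i < 2, j < 2)
    if (i : nat) == 0%N then (if (j : nat) == 0%N then a else b)
    else (if (j : nat) == 0%N then c else d).

Definition pauli_x : 'M[algC]_2 := mx2 0 1 1 0.
Definition pauli_y : 'M[algC]_2 := mx2 0 (- 'i) 'i 0.
Definition pauli_z : 'M[algC]_2 := mx2 1 0 0 (-1).

(* tau acts on the first tensor factor, sigma on the second: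
   tau^mu (x) sigma^nu  =  tensmx tau sigma  (Kronecker product). *)
Definition U_a : M4 := pauli_y *t (1%:M : 'M[algC]_2).
Definition U_b : M4 := - (pauli_x *t pauli_z).
Definition U_c : M4 := - (pauli_x *t pauli_y).

(* Bravais vectors in the basis (a1, a2): R = n1 a1 + n2 a2 ~ (n1, n2). *)
Definition vec := (int * int)%type.
Definition vadd (u v : vec) : vec := (u.1 + v.1, u.2 + v.2).
Definition vsub (u v : vec) : vec := (u.1 - v.1, u.2 - v.2).
Definition a1 : vec := (1, 0).
Definition a2 : vec := (0, 1).
Definition v0 : vec := (0, 0).

Inductive btype := Ba | Bb | Bc.
Definition btype_eqb (x y : btype) : bool :=
  match x, y with Ba, Ba | Bb, Bb | Bc, Bc => true | _, _ => false end.
Lemma btype_eqP : Equality.axiom btype_eqb.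
Proof. by case; case; constructor. Qed.
HB.instance Definition _ := hasDecEq.Build btype btype_eqP.

Definition Umat (t : btype) : M4 :=
  match t with Ba => U_a | Bb => U_b | Bc => U_c end.

(* displacement: a bond of type t joins A(R) and B(R - delta t) *)
Definition delta (t : btype) : vec :=
  match t with Ba => a1 | Bb => a2 | Bc => v0 end.

(* sites: (true, R) = A(R), (false, R) = B(R) *)
Definition site := (bool * vec)%type.
Definition siteA (R : vec) : site := (true, R).
Definition siteB (R : vec) : site := (false, R).

(* bonds: (R, t) = the bond of type t between A(R) and B(R - delta t) *)
Definition bond := (vec * btype)%type.
Definition bond_A (e : bond) : site := siteA e.1.
Definition bond_B (e : bond) : site := siteB (vsub e.1 (delta e.2)).
Definition incident (v : site) (e : bond) : bool :=
  (v == bond_A e) || (v == bond_B e).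

Definition bondAB (R R' : vec) : option bond :=
  if R' == R then Some (R, Bc)
  else if R' == vsub R a1 then Some (R, Ba)
  else if R' == vsub R a2 then Some (R, Bb)
  else None.

Definition bond_of (i j : site) : option bond :=
  match i, j with
  | (true, R), (false, R') => bondAB R R'
  | (false, R'), (true, R) => bondAB R R'
  | _, _ => None
  end.

(* link matrix U_ij = U_ji = U^alpha on a bond of type alpha (0 otherwise) *)
Definition U (i j : site) : M4 :=
  match bond_of i j with Some e => Umat e.2 | None => 0 end.

(* hexagon labelled by R: vertices in cyclic order *)
Definition hex_vertices (R : vec) : seq site :=
  [:: siteA R; siteB R; siteA (vadd R a1); siteB (vsub (vadd R a1) a2);
      siteA (vsub (vadd R a1) a2); siteB (vsub R a2)].

Definition hex_bonds (R : vec) : seq bond :=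
  [:: (R, Bc); (vadd R a1, Ba); (vadd R a1, Bb);
      (vsub (vadd R a1) a2, Bc); (vsub (vadd R a1) a2, Ba); (R, Bb)].

Definition cyc_prod (s : seq site) : M4 :=
  foldr (fun p acc => U p.1 p.2 *m acc) 1%:M (zip s (rot 1 s)).

(* a flake is given by a finite list P of hexagon labels (closed plaquettes) *)
Definition flake_sites (P : seq vec) : seq site :=
  undup (flatten (map hex_vertices P)).
Definition flake_bonds (P : seq vec) : seq bond :=
  undup (flatten (map hex_bonds P)).
Definition flake_adj (P : seq vec) (i j : site) : bool :=
  match bond_of i j with Some e => e \in flake_bonds P | None => false end.

(* cycle space (over GF(2)) generated by the hexagon boundaries: every
   edge set of the flake with all degrees even is a GF(2)-sum of hexagon
   boundaries of the flake. *)
Definition cycle_space_generated_by_hexagons (P : seq vec) : Prop :=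
  forall E : pred bond,
    (forall e, E e -> e \in flake_bonds P) ->
    (forall v : site, ~~ odd (count (fun e => E e && incident v e) (flake_bonds P))) ->
    exists Q : pred vec, forall e,
      E e = odd (count (fun p => Q p && (e \in hex_bonds p)) (undup P)).

Definition has_hamiltonian_path (P : seq vec) : Prop :=
  exists (x : site) (s : seq site),
    [/\ uniq (x :: s),
        (forall v, (v \in x :: s) = (v \in flake_sites P)) &
        path (flake_adj P) x s].

(* The link matrices U^a, U^b, U^c are Hermitian involutions which pairwise
   anticommute.  Up to rotation and orientation the product around a hexagon
   is (U^c U^a U^b)^2 or (U^a U^c U^b)^2, and the square of a product of three
   anticommuting involutions is -1.
   X = U^a U^c and Y = U^b U^c are anticommuting unitary square roots of -1,
   so g(A(R)) = X^(n1 mod 2) Y^(n2 mod 2) and g(B(R)) = g(A(R)) U^c, where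
   R = n1 a1 + n2 a2, turn every link into a sign (c-links into 1, a- and
   b-links into +-1 through X and Y).  This gauge is defined on the whole
   lattice.  As g_i U_ij g_j^*
   telescopes around a loop, the product of the signs around a hexagon is its
   link product -1. *)

From HB Require Import structures.
From mathcomp Require Import all_boot all_order all_algebra algC.
From mathcomp Require Import spectral mxtens.
From mathcomp Require Import ring zify.
Set Implicit Arguments. Unset Strict Implicit. Unset Printing Implicit Defensive.
Import Order.TTheory GRing.Theory Num.Theory.
Local Open Scope ring_scope.
Local Open Scope sesquilinear_scope.

Lemma take_zip (S T : Type) k (s : seq S) (t : seq T) :
  take k (zip s t) = zip (take k s) (take k t).
Proof. by elim: s t k => [|x s IHs] [|y t] [|k] //=; rewrite IHs. Qed.

Lemma drop_zip (S T : Type) k (s : seq S) (t : seq T) :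
  drop k (zip s t) = zip (drop k s) (drop k t).
Proof. by elim: s t k => [|x s IHs] [|y t] [|k] //=; case: (drop _ _). Qed.

Lemma zip_rot (S T : Type) k (s : seq S) (t : seq T) :
  size s = size t -> zip (rot k s) (rot k t) = rot k (zip s t).
Proof.
by move=> eq_st; rewrite /rot drop_zip take_zip zip_cat // !size_drop eq_st.
Qed.

Section Anticommutation.
Variables (R : pzRingType) (n : nat).
Implicit Types A B e f g : 'M[R]_n.

Definition anticommute A B := A *m B = - (B *m A).

Lemma anticommuteC A B : anticommute A B -> anticommute B A.
Proof. by rewrite /anticommute => ->; rewrite opprK. Qed.

Lemma anticommuteNl A B : anticommute A B -> anticommute (- A) B.
Proof. by rewrite /anticommute mulNmx mulmxN => ->. Qed.

Lemma anticommuteNr A B : anticommute A B -> anticommute A (- B).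
Proof. by rewrite /anticommute mulNmx mulmxN => ->. Qed.

Lemma anticommute_mul_sqr e f :
  anticommute e f -> e *m f *m e *m f = - (e *m e *m (f *m f)).
Proof.
move=> ef; rewrite -[e *m f *m e]mulmxA (anticommuteC ef).
by rewrite mulmxN mulNmx !mulmxA.
Qed.

Lemma involution_anticommute_mul_sqr e f :
  e *m e = 1%:M -> f *m f = 1%:M -> anticommute e f ->
  e *m f *m (e *m f) = - 1%:M.
Proof. by move=> ee ff ef; rewrite mulmxA anticommute_mul_sqr // ee ff mulmx1. Qed.

Lemma anticommute_mul_commute e f g :
  anticommute e g -> anticommute f g -> e *m f *m g = g *m (e *m f).
Proof.
move=> eg fg; rewrite -mulmxA fg mulmxN mulmxA eg.
by rewrite mulNmx opprK mulmxA.
Qed.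

Section CliffordTriple.
Variables e1 e2 e3 : 'M[R]_n.
Hypotheses (e1_inv : e1 *m e1 = 1%:M) (e2_inv : e2 *m e2 = 1%:M)
  (e3_inv : e3 *m e3 = 1%:M).
Hypotheses (e12 : anticommute e1 e2) (e13 : anticommute e1 e3)
  (e23 : anticommute e2 e3).

Lemma clifford_triple_sqr : e1 *m e2 *m e3 *m e1 *m e2 *m e3 = - 1%:M.
Proof.
have -> : e1 *m e2 *m e3 *m e1 *m e2 *m e3 = e1 *m e2 *m (e3 *m (e1 *m e2)) *m e3.
  by rewrite !mulmxA.
rewrite -(anticommute_mul_commute e13 e23) mulmxA -mulmxA e3_inv mulmx1.
by rewrite mulmxA anticommute_mul_sqr // e1_inv e2_inv mulmx1.
Qed.

Lemma clifford_pair_anticommute : anticommute (e1 *m e3) (e2 *m e3).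
Proof.
rewrite /anticommute.
have -> : e1 *m e3 *m (e2 *m e3) = - (e1 *m e2).
  rewrite mulmxA -[e1 *m e3 *m e2]mulmxA (anticommuteC e23).
  by rewrite mulmxN mulNmx mulmxA -mulmxA e3_inv mulmx1.
have -> : e2 *m e3 *m (e1 *m e3) = e1 *m e2.
  rewrite mulmxA -[e2 *m e3 *m e1]mulmxA (anticommuteC e13).
  by rewrite mulmxN mulNmx mulmxA -mulmxA e3_inv mulmx1 (anticommuteC e12) opprK.
by [].
Qed.

End CliffordTriple.
End Anticommutation.

Lemma scalar_mxN1 (R : pzRingType) n : (-1)%:M = - 1%:M :> 'M[R]_n.
Proof. exact: raddfN. Qed.

Section MatrixProducts.
Variables (R : comUnitRingType) (n : nat).
Implicit Types (A B : 'M[R]_n) (l : seq 'M[R]_n).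

Definition mxprod l := foldr mulmx 1%:M l.

Lemma mxprod_cat l1 l2 : mxprod (l1 ++ l2) = mxprod l1 *m mxprod l2.
Proof. by elim: l1 => [|A l1 IHl1] /=; rewrite ?mul1mx // IHl1 mulmxA. Qed.

Lemma mxprod_unit l : {in l, forall A, A \in unitmx} -> mxprod l \in unitmx.
Proof.
elim: l => [|A l IHl] /= l_unit; first exact: unitmx1.
rewrite unitmx_mul l_unit ?mem_head ?IHl // => B lB.
by rewrite l_unit ?inE ?lB ?orbT.
Qed.

Lemma mulmx_scalar_unitC A B (c : R) :
  A \in unitmx -> A *m B = c%:M -> B *m A = c%:M.
Proof.
move=> A_unit AB; rewrite -(mulKmx A_unit B) AB scalar_mxC.
by rewrite -mulmxA mulVmx // mulmx1.
Qed.

Lemma mxprod_rot k l (c : R) :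
  {in l, forall A, A \in unitmx} -> mxprod l = c%:M -> mxprod (rot k l) = c%:M.
Proof.
move=> l_unit; rewrite -{1}(cat_take_drop k l) /rot !mxprod_cat.
apply: mulmx_scalar_unitC; apply: mxprod_unit => A /mem_take; exact: l_unit.
Qed.

End MatrixProducts.

Lemma adjmxM (C : numClosedFieldType) m n p
    (A : 'M[C]_(m, n)) (B : 'M[C]_(n, p)) :
  (A *m B)^t* = B^t* *m A^t*.
Proof. by rewrite trmx_mul map_mxM. Qed.

Lemma adjmx1 (C : numClosedFieldType) n : (1%:M : 'M[C]_n)^t* = 1%:M.
Proof. by rewrite trmx1 map_mx1. Qed.

Lemma adjmxN (C : numClosedFieldType) m n (A : 'M[C]_(m, n)) :
  (- A)^t* = - A^t*.
Proof. by apply/matrixP => i j; rewrite !mxE raddfN. Qed.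

Lemma hermitian_involution_unitary (C : numClosedFieldType) n (A : 'M[C]_n) :
  A^t* = A -> A *m A = 1%:M -> A \is unitarymx.
Proof. by move=> A_herm A_inv; apply/unitarymxP; rewrite A_herm. Qed.

Lemma unitary_sqrN1_adj (C : numClosedFieldType) n (A : 'M[C]_n) :
  A \is unitarymx -> A *m A = - 1%:M -> A^t* = - A.
Proof.
move=> /unitarymxP A_unitary AA.
by rewrite -[A^t*]mul1mx -[1%:M]opprK -AA mulNmx -mulmxA A_unitary mulmx1.
Qed.

Section Holonomy.
Variables (T : eqType) (C : numClosedFieldType) (n : nat).
Variable L : T -> T -> 'M[C]_n.

Definition loop_links (s : seq T) := zip s (rot 1 s).

Definition holonomy (s : seq T) :=
  foldr (fun p M => L p.1 p.2 *m M) 1%:M (loop_links s).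

Lemma loop_links_rot k s : loop_links (rot k s) = rot k (loop_links s).
Proof. by rewrite /loop_links rot_rot zip_rot // size_rot. Qed.

Lemma holonomyE s : holonomy s = mxprod [seq L p.1 p.2 | p <- loop_links s].
Proof. by rewrite /mxprod foldr_map. Qed.

Variables (g : T -> 'M[C]_n) (phase : T -> T -> C).

Lemma gauge_path_prod x s y :
  {in s, forall v, g v \is unitarymx} ->
  {in zip (x :: s) (rcons s y), forall p,
     g p.1 *m L p.1 p.2 *m (g p.2)^t* = (phase p.1 p.2)%:M} ->
  g x *m foldr (fun p M => L p.1 p.2 *m M) 1%:M (zip (x :: s) (rcons s y))
      *m (g y)^t*
    = (\prod_(p <- zip (x :: s) (rcons s y)) phase p.1 p.2)%:M.
Proof.
elim: s x => [|z s IHs] x g_unitary link_gauge /=.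
  by rewrite big_seq1 mulmx1 -(link_gauge (x, y)) ?mem_head.
rewrite big_cons scalar_mxM -(link_gauge (x, z)) ?mem_head //= -IHs; last first.
- by move=> p sp; rewrite link_gauge // in_cons sp orbT.
- by move=> v sv; rewrite g_unitary // in_cons sv orbT.
by rewrite !mulmxA mulmxKtV ?g_unitary ?mem_head.
Qed.

Lemma gauge_loop_prod s (c : C) :
  {in s, forall v, g v \is unitarymx} ->
  {in loop_links s, forall p,
     g p.1 *m L p.1 p.2 *m (g p.2)^t* = (phase p.1 p.2)%:M} ->
  holonomy s = c%:M ->
  (\prod_(p <- loop_links s) phase p.1 p.2)%:M = c%:M :> 'M[C]_n.
Proof.
case: s => [|x s] g_unitary link_gauge hol; first by rewrite big_nil -hol.
rewrite /holonomy /loop_links rot1_cons in link_gauge hol *.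
rewrite -gauge_path_prod //.
  by rewrite hol scalar_mxC -mulmxA (unitarymxP (g_unitary _ (mem_head _ _))) mulmx1.
by move=> v sv; rewrite g_unitary // in_cons sv orbT.
Qed.

End Holonomy.

Section ParityGauge.
Variables (C : numClosedFieldType) (n : nat) (X Y : 'M[C]_n).
Hypotheses (X_unitary : X \is unitarymx) (Y_unitary : Y \is unitarymx).
Hypotheses (X_sqr : X *m X = - 1%:M) (Y_sqr : Y *m Y = - 1%:M).
Hypothesis XY_anticommute : anticommute X Y.

Definition mxpowb (A : 'M[C]_n) (b : bool) := if b then A else 1%:M.

Definition parity_gauge (p q : bool) := mxpowb X p *m mxpowb Y q.

Lemma mxpowb_unitary A b : A \is unitarymx -> mxpowb A b \is unitarymx.
Proof. by case: b => //= _; apply/unitarymxP; rewrite adjmx1 mulmx1. Qed.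

Lemma parity_gauge_unitary p q : parity_gauge p q \is unitarymx.
Proof. by rewrite mul_unitarymx ?mxpowb_unitary. Qed.

Lemma X_adj : X^t* = - X. Proof. exact: unitary_sqrN1_adj. Qed.

Lemma Y_adj : Y^t* = - Y. Proof. exact: unitary_sqrN1_adj. Qed.

Lemma mulmx_XX m (A : 'M[C]_(m, n)) : A *m X *m X = - A.
Proof. by rewrite -mulmxA X_sqr mulmxN mulmx1. Qed.

Lemma mulmx_YY m (A : 'M[C]_(m, n)) : A *m Y *m Y = - A.
Proof. by rewrite -mulmxA Y_sqr mulmxN mulmx1. Qed.

Lemma parity_gauge_X p q :
  parity_gauge p q *m X *m (parity_gauge (~~ p) q)^t* = ((-1) ^+ (p (+) q))%:M.
Proof.
rewrite /parity_gauge !adjmxM.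
by case: p; case: q;
  rewrite /= ?adjmx1 ?X_adj ?Y_adj
    ?(mulmx1, mul1mx, mulmxN, mulNmx, opprK) ?mulmxA
    ?(anticommute_mul_sqr XY_anticommute)
    ?(anticommute_mul_sqr (anticommuteC XY_anticommute))
    ?(mulmx_XX, mulmx_YY, X_sqr, Y_sqr, mulmx1, mul1mx, mulmxN, mulNmx, opprK)
    ?expr0 ?expr1 ?raddfN.
Qed.

Lemma parity_gauge_Y p q :
  parity_gauge p q *m Y *m (parity_gauge p (~~ q))^t* = ((-1) ^+ q)%:M.
Proof.
rewrite /parity_gauge !adjmxM.
by case: p; case: q;
  rewrite /= ?adjmx1 ?X_adj ?Y_adj
    ?(mulmx1, mul1mx, mulmxN, mulNmx, opprK) ?mulmxA
    ?(mulmx_XX, mulmx_YY, X_sqr, Y_sqr, mulmx1, mul1mx, mulmxN, mulNmx, opprK)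
    ?expr0 ?expr1 ?raddfN.
Qed.

End ParityGauge.

Section TensorProducts.
Variables (R : comPzRingType) (m n : nat).
Implicit Types (A : 'M[R]_m) (B : 'M[R]_n).

Lemma tensmxNl A B : (- A) *t B = - (A *t B).
Proof. by apply/matrixP => i j; rewrite !mxE mulNr. Qed.

Lemma tensmxNr A B : A *t (- B) = - (A *t B).
Proof. by apply/matrixP => i j; rewrite !mxE mulrN. Qed.

Lemma tensmx11 : (1%:M : 'M[R]_m) *t (1%:M : 'M[R]_n) = 1%:M.
Proof.
apply/matrixP => i j.
case: (mxtens_indexP i) => i1 i2; case: (mxtens_indexP j) => j1 j2.
rewrite tensmxE !mxE -natrM mulnb (inj_eq (can_inj (@mxtens_indexK _ _))).
by rewrite xpair_eqE.
Qed.

Lemma tensmx_anticommute_l A A' B B' :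
  anticommute A A' -> B *m B' = B' *m B -> anticommute (A *t B) (A' *t B').
Proof. by move=> AA' BB'; rewrite /anticommute !tensmx_mul AA' BB' tensmxNl. Qed.

Lemma tensmx_anticommute_r A A' B B' :
  A *m A' = A' *m A -> anticommute B B' -> anticommute (A *t B) (A' *t B').
Proof. by move=> AA' BB'; rewrite /anticommute !tensmx_mul AA' BB' tensmxNr. Qed.

End TensorProducts.

Lemma adjmx_tens (C : numClosedFieldType) m n p q
    (A : 'M[C]_(m, n)) (B : 'M[C]_(p, q)) :
  (A *t B)^t* = A^t* *t B^t*.
Proof. by rewrite trmx_tens map_mxT. Qed.

Lemma mx2_adj a b c d : (mx2 a b c d)^t* = mx2 a^* c^* b^* d^*.
Proof. by apply/matrixP => -[[|[|i]] Hi] -[[|[|j]] Hj] //; rewrite !mxE. Qed.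

Lemma mx2_mul a b c d a' b' c' d' :
  mx2 a b c d *m mx2 a' b' c' d' =
  mx2 (a * a' + b * c') (a * b' + b * d') (c * a' + d * c') (c * b' + d * d').
Proof.
apply/matrixP => -[[|[|i]] Hi] -[[|[|j]] Hj] //;
by rewrite !mxE !big_ord_recl big_ord0 !mxE /= addr0.
Qed.

Lemma mx2N a b c d : - mx2 a b c d = mx2 (- a) (- b) (- c) (- d).
Proof. by apply/matrixP => -[[|[|i]] Hi] -[[|[|j]] Hj] //; rewrite !mxE. Qed.

Lemma mx2_1 : mx2 1 0 0 1 = 1%:M.
Proof. by apply/matrixP => -[[|[|i]] Hi] -[[|[|j]] Hj] //; rewrite !mxE. Qed.

Lemma pauli_x_herm : pauli_x^t* = pauli_x.
Proof. by rewrite mx2_adj conjC0 conjC1. Qed.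

Lemma pauli_y_herm : pauli_y^t* = pauli_y.
Proof. by rewrite mx2_adj conjC0 raddfN /= conjCi opprK. Qed.

Lemma pauli_z_herm : pauli_z^t* = pauli_z.
Proof. by rewrite mx2_adj conjC0 conjC1 raddfN /= conjC1. Qed.

Lemma pauli_x_sqr : pauli_x *m pauli_x = 1%:M.
Proof. by rewrite mx2_mul -mx2_1; congr mx2; ring. Qed.

Lemma pauli_y_sqr : pauli_y *m pauli_y = 1%:M.
Proof.
have ii : 'i * 'i = -1 :> algC by rewrite -expr2 sqrCi.
by rewrite mx2_mul -mx2_1 !mulNr !mulrN ii opprK; congr mx2; ring.
Qed.

Lemma pauli_z_sqr : pauli_z *m pauli_z = 1%:M.
Proof. by rewrite mx2_mul -mx2_1; congr mx2; ring. Qed.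

Lemma pauli_xy_anticommute : anticommute pauli_x pauli_y.
Proof. by rewrite /anticommute !mx2_mul mx2N; congr mx2; ring. Qed.

Lemma pauli_yz_anticommute : anticommute pauli_y pauli_z.
Proof. by rewrite /anticommute !mx2_mul mx2N; congr mx2; ring. Qed.

Lemma Umat_herm t : (Umat t)^t* = Umat t.
Proof.
case: t; rewrite /= /U_a /U_b /U_c ?adjmxN adjmx_tens.
- by rewrite pauli_y_herm adjmx1.
- by rewrite pauli_x_herm pauli_z_herm.
- by rewrite pauli_x_herm pauli_y_herm.
Qed.

Lemma Umat_sqr t : Umat t *m Umat t = 1%:M.
Proof.
case: t; rewrite /= /U_a /U_b /U_c ?mulNmx ?mulmxN ?opprK tensmx_mul -tensmx11.
- by rewrite pauli_y_sqr mulmx1.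
- by rewrite pauli_x_sqr pauli_z_sqr.
- by rewrite pauli_x_sqr pauli_y_sqr.
Qed.

Lemma Umat_unitary t : Umat t \is unitarymx.
Proof. exact: hermitian_involution_unitary (Umat_herm t) (Umat_sqr t). Qed.

Lemma U_ab_anticommute : anticommute U_a U_b.
Proof.
apply/anticommuteNr/tensmx_anticommute_l; last by rewrite mul1mx mulmx1.
exact/anticommuteC/pauli_xy_anticommute.
Qed.

Lemma U_ac_anticommute : anticommute U_a U_c.
Proof.
apply/anticommuteNr/tensmx_anticommute_l; last by rewrite mul1mx mulmx1.
exact/anticommuteC/pauli_xy_anticommute.
Qed.

Lemma U_bc_anticommute : anticommute U_b U_c.
Proof.
apply/anticommuteNl/anticommuteNr/tensmx_anticommute_r; first by [].
exact/anticommuteC/pauli_yz_anticommute.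
Qed.

Lemma vsubr0 R : vsub R v0 = R.
Proof. by case: R => x y; rewrite /vsub /= !subr0. Qed.

Lemma bondAB_delta R t : bondAB R (vsub R (delta t)) = Some (R, t).
Proof.
rewrite /bondAB; case: t => /=; rewrite ?vsubr0 ?eqxx //.
all: case: R => x y; rewrite /vsub /= !xpair_eqE ?eqxx.
all: by rewrite !ifF //; lia.
Qed.

Lemma bondAB_Some R R' e :
  bondAB R R' = Some e -> e.1 = R /\ R' = vsub R (delta e.2).
Proof.
rewrite /bondAB; case: ifP => [/eqP -> [<-] | _]; first by rewrite vsubr0.
case: ifP => [/eqP -> [<-] // | _]; case: ifP => [/eqP -> [<-] // | _] //.
Qed.

Lemma bond_of_AB e : bond_of (bond_A e) (bond_B e) = Some e.
Proof. by case: e => R t; exact: bondAB_delta. Qed.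

Lemma bond_ofC i j : bond_of i j = bond_of j i.
Proof. by case: i j => [[] R] [[] R']. Qed.

Lemma bond_ofP i j e : bond_of i j = Some e ->
  (i, j) = (bond_A e, bond_B e) \/ (i, j) = (bond_B e, bond_A e).
Proof. by case: i j => [[] R] [[] R'] //= /bondAB_Some [<- ->]; [left | right]. Qed.

Lemma hex_loop_bonds R (reverse : bool) :
  [seq bond_of p.1 p.2 | p <- loop_links
     (if reverse then rev (hex_vertices R) else hex_vertices R)]
  = [seq Some e | e <- if reverse then rot 1 (rev (hex_bonds R)) else hex_bonds R].
Proof.
have bondAB_eq R1 R2 t : R2 = vsub R1 (delta t) -> bondAB R1 R2 = Some (R1, t).
  by move->; exact: bondAB_delta.
case: R => x y; case: reverse; congr [:: _; _; _; _; _; _]; apply: bondAB_eq;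
  rewrite /vsub /vadd /=; congr pair; ring.
Qed.

Lemma hex_links_mx R (reverse : bool) :
  [seq U p.1 p.2 | p <- loop_links
     (if reverse then rev (hex_vertices R) else hex_vertices R)]
  = [seq Umat t | t <- if reverse then [:: Ba; Bc; Bb; Ba; Bc; Bb]
                                  else [:: Bc; Ba; Bb; Bc; Ba; Bb]].
Proof.
have -> : U = fun i j => oapp (fun e => Umat e.2) 0 (bond_of i j) by [].
rewrite (map_comp (oapp _ 0) (fun p => bond_of p.1 p.2)) hex_loop_bonds.
by case: reverse.
Qed.

Lemma hex_holonomy R k (reverse : bool) :
  cyc_prod (rot k (if reverse then rev (hex_vertices R) else hex_vertices R))
  = - 1%:M.
Proof.
have -> : cyc_prod = holonomy U by [].
rewrite holonomyE loop_links_rot map_rot hex_links_mx -scalar_mxN1.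
apply: mxprod_rot => [A /mapP[t _ ->] | ].
  exact/unitarymx_unit/Umat_unitary.
have ab := U_ab_anticommute; have ac := U_ac_anticommute.
have bc := U_bc_anticommute.
case: reverse; rewrite /mxprod; cbn [map foldr]; rewrite mulmx1 !mulmxA scalar_mxN1.
- exact: clifford_triple_sqr (Umat_sqr Ba) (Umat_sqr Bc) (Umat_sqr Bb)
    ac ab (anticommuteC bc).
- exact: clifford_triple_sqr (Umat_sqr Bc) (Umat_sqr Ba) (Umat_sqr Bb)
    (anticommuteC ac) (anticommuteC bc) ab.
Qed.

Lemma odd_absz_subr1 (z : int) : odd `|z - 1|%N = ~~ odd `|z|%N.
Proof. lia. Qed.

Section LatticeGauge.

Let X := U_a *m U_c.
Let Y := U_b *m U_c.
Let X_unitary : X \is unitarymx := mul_unitarymx (Umat_unitary Ba) (Umat_unitary Bc).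
Let Y_unitary : Y \is unitarymx := mul_unitarymx (Umat_unitary Bb) (Umat_unitary Bc).
Let X_sqr : X *m X = - 1%:M :=
  involution_anticommute_mul_sqr (Umat_sqr Ba) (Umat_sqr Bc) U_ac_anticommute.
Let Y_sqr : Y *m Y = - 1%:M :=
  involution_anticommute_mul_sqr (Umat_sqr Bb) (Umat_sqr Bc) U_bc_anticommute.
Let XY_anticommute : anticommute X Y :=
  clifford_pair_anticommute (Umat_sqr Bc) U_ab_anticommute U_ac_anticommute
    U_bc_anticommute.

Definition gauge (v : site) : M4 :=
  let G := parity_gauge X Y (odd `|v.2.1|%N) (odd `|v.2.2|%N) in
  if v.1 then G else G *m U_c.

Definition flux_sign (e : bond) : algC :=
  match e.2 with
  | Ba => (-1) ^+ (odd `|e.1.1|%N (+) odd `|e.1.2|%N)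
  | Bb => (-1) ^+ odd `|e.1.2|%N
  | Bc => 1
  end.

Lemma flux_sign_pm1 e : flux_sign e = 1 \/ flux_sign e = -1.
Proof.
have sign_pm1 (b : bool) : (-1) ^+ b = 1 \/ (-1) ^+ b = -1 :> algC.
  by case: b; [right; rewrite expr1 | left; rewrite expr0].
by case: e => R [] /=; [exact: sign_pm1 | exact: sign_pm1 | left].
Qed.

Lemma gauge_unitary v : gauge v \is unitarymx.
Proof.
have G_unitary p q := parity_gauge_unitary X_unitary Y_unitary p q.
case: v => [[] R]; rewrite /gauge /=; first exact: G_unitary.
exact: mul_unitarymx (G_unitary _ _) (Umat_unitary Bc).
Qed.

Lemma gauge_bond e :
  gauge (bond_A e) *m Umat e.2 *m (gauge (bond_B e))^t* = (flux_sign e)%:M.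
Proof.
case: e => [[x y] []]; rewrite /gauge /flux_sign /= ?subr0 ?odd_absz_subr1.
all: rewrite adjmxM (Umat_herm Bc) mulmxA.
- by rewrite -[_ *m U_a *m U_c]mulmxA parity_gauge_X.
- by rewrite -[_ *m U_b *m U_c]mulmxA parity_gauge_Y.
- rewrite -[_ *m U_c *m U_c]mulmxA (Umat_sqr Bc) mulmx1.
  exact/unitarymxP/(gauge_unitary (true, (x, y))).
Qed.

Lemma gauge_bond_rev e :
  gauge (bond_B e) *m Umat e.2 *m (gauge (bond_A e))^t* = (flux_sign e)%:M.
Proof.
have sign_real : ((flux_sign e)%:M)^t* = (flux_sign e)%:M :> M4.
  rewrite tr_scalar_mx map_scalar_mx.
  by case: (flux_sign_pm1 e) => ->; rewrite ?rmorph1 ?rmorphN1.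
by rewrite -sign_real -gauge_bond [RHS]adjmxM trmxCK [in RHS]adjmxM Umat_herm mulmxA.
Qed.

Lemma gauge_link i j e :
  bond_of i j = Some e -> gauge i *m U i j *m (gauge j)^t* = (flux_sign e)%:M.
Proof.
move=> ij; rewrite /U ij.
by case: (bond_ofP ij) => -[-> ->]; [exact: gauge_bond | exact: gauge_bond_rev].
Qed.

Lemma hex_flux_sign R : \prod_(e <- hex_bonds R) flux_sign e = -1.
Proof.
have hol : holonomy U (hex_vertices R) = (-1)%:M.
  by rewrite scalar_mxN1 -(hex_holonomy R 0 false) rot0.
have link_bond q : q \in loop_links (hex_vertices R) ->
    exists e, bond_of q.1 q.2 = Some e.
  move=> /(map_f (fun p => bond_of p.1 p.2)); rewrite (hex_loop_bonds R false).
  by case/mapP=> e _ ->; exists e.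
have hex_gauge : {in loop_links (hex_vertices R), forall q,
    gauge q.1 *m U q.1 q.2 *m (gauge q.2)^t*
      = (oapp flux_sign 0 (bond_of q.1 q.2))%:M}.
  by move=> q /link_bond[e qe]; rewrite qe; exact: gauge_link.
have := gauge_loop_prod (phase := fun i j => oapp flux_sign 0 (bond_of i j))
  (fun v _ => gauge_unitary v) hex_gauge hol.
rewrite -(big_map (fun p => bond_of p.1 p.2) xpredT (oapp flux_sign 0)).
rewrite (hex_loop_bonds R false) big_map => /(congr1 (fun M : M4 => M 0 0)).
by rewrite !mxE eqxx !mulr1n.
Qed.

End LatticeGauge.

Theorem mainTheorem3 :
  (* (i) the ordered product of link matrices around every hexagon
     (from any starting vertex, in either orientation) is -I_4 *)
  (forall (R : vec) (k : nat) (reverse : bool),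
      cyc_prod (rot k (if reverse then rev (hex_vertices R) else hex_vertices R))
      = - 1%:M)
  /\
  (* (ii) gauge equivalence to the pi-flux model on flakes *)
  (forall P : seq vec,
      cycle_space_generated_by_hexagons P ->
      has_hamiltonian_path P ->
      exists (g : site -> M4) (eta : bond -> algC),
        [/\ (forall v, v \in flake_sites P -> g v \is unitarymx),
            (forall e, e \in flake_bonds P -> eta e = 1 \/ eta e = -1),
            (forall e, e \in flake_bonds P ->
               g (bond_A e) *m U (bond_A e) (bond_B e) *m (g (bond_B e))^t*
                 = (eta e)%:M
               /\ g (bond_B e) *m U (bond_B e) (bond_A e) *m (g (bond_A e))^t*
                 = (eta e)%:M) &
            (forall p, p \in P -> \prod_(e <- hex_bonds p) eta e = -1)]).
Proof.
split; first exact: hex_holonomy.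
move=> P _ _; exists gauge, flux_sign; split.
- by move=> v _; exact: gauge_unitary.
- by move=> e _; exact: flux_sign_pm1.
- move=> e _; split; apply: gauge_link; first exact: bond_of_AB.
  by rewrite bond_ofC bond_of_AB.
- by move=> p _; exact: hex_flux_sign.
Qed.
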